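(* Let $I$ be a nonempty finite set, $A$ a nonempty set, $\rho_i:A\to A$ maps ($i\in I$) with $\rho_i^2=\mathrm{id}$ for all $i$, and $C^a=(c^a_{ij})_{i,j\in I}\in\mathbb Z^{I\times I}$ ($a\in A$) with $c^a_{ii}=2$ for all $i\in I$, $a\in A$. For $a\in A$ let $R^a\subset\mathbb Z^I$ be subsets satisfying (R1)–(R4) below. Then $\mathcal C=(I,A,(\rho_i)_{i\in I},(C^a)_{a\in A})$ is a Cartan scheme and $(R^a)_{a\in A}$ is a root system of type $\mathcal C$. Here, with $\sigma_i^a\in\mathrm{End}(\mathbb Z^I)$ given by $\sigma_i^a(\alpha_j)=\alpha_j-c^a_{ij}\alpha_i$, $R^a_+=R^a\cap\mathbb N_0^I$ and $m^a_{i,j}=|R^a\cap(\mathbb N_0\alpha_i+\mathbb N_0\alpha_j)|$, the conditions are, for all $a\in A$, $i,j\in I$: (R1) $R^a=R^a_+\cup(-R^a_+)$; (R2) $R^a\cap\mathbb Z\alpha_i=\{\alpha_i,-\alpha_i\}$; (R3) $\sigma_i^a(R^a)=R^{\rho_i(a)}$; (R4) if $i\neq j$ and $m^a_{i,j}$ is finite then $(\rho_i\rho_j)^{m^a_{i,j}}(a)=a$.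
   Context: $\{\alpha_i\mid i\in I\}$ is the standard basis of $\mathbb Z^I$; $\mathbb N_0=\{0,1,2,\dots\}$. A generalized Cartan matrix is $C=(c_{ij})_{i,j\in I}\in\mathbb Z^{I\times I}$ with $c_{ii}=2$, $c_{jk}\le0$ for $j\ne k$, and $c_{ij}=0\Rightarrow c_{ji}=0$. A Cartan scheme $\mathcal C=\mathcal C(I,A,(\rho_i)_{i\in I},(C^a)_{a\in A})$ consists of a nonempty set $A$, maps $\rho_i:A\to A$ and generalized Cartan matrices $C^a$ such that (C1) $\rho_i^2=\mathrm{id}$ and (C2) $c^a_{ij}=c^{\rho_i(a)}_{ij}$ for all $a\in A$, $i,j\in I$. A root system of type $\mathcal C$ is a family $(R^a)_{a\in A}$ of subsets of $\mathbb Z^I$ satisfying (R1)–(R4) as in the claim. *)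

From mathcomp Require Import all_boot all_order all_algebra.
Set Implicit Arguments. Unset Strict Implicit. Unset Printing Implicit Defensive.
Import Order.TTheory GRing.Theory Num.Theory.
Local Open Scope ring_scope.

(* Z^I is modelled as {ffun I -> int}, I a finite type. *)
Section CartanDefs.
Variable I : finType.
Variable A : Type.
Implicit Types (rho : I -> A -> A) (C : A -> I -> I -> int)
  (R : A -> {ffun I -> int} -> Prop).

Definition alpha (i : I) : {ffun I -> int} := [ffun j => ((j == i) : nat)%:Z].

Definition gen_cartan_matrix (c : I -> I -> int) : Prop :=
  (forall i, c i i = 2) /\
  (forall j k, j != k -> c j k <= 0) /\
  (forall i j, c i j = 0 -> c j i = 0).

Definition cartan_scheme rho C : Prop :=
  (exists a : A, True) /\
  (forall a, gen_cartan_matrix (C a)) /\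
  (forall i a, rho i (rho i a) = a) /\
  (forall a i j, C a i j = C (rho i a) i j).

(* sigma_i^a : alpha_j |-> alpha_j - c^a_{ij} alpha_i, extended linearly *)
Definition sigma C (a : A) (i : I) (v : {ffun I -> int}) : {ffun I -> int} :=
  [ffun k => v k - (\sum_(j : I) C a i j * v j) * alpha i k].

Definition nonneg (v : {ffun I -> int}) : bool := [forall k, 0 <= v k].

Definition Rplus R (a : A) (v : {ffun I -> int}) : Prop := R a v /\ nonneg v.

Definition in_cone (i j : I) (v : {ffun I -> int}) : Prop :=
  exists p q : nat, v = [ffun k => p%:Z * alpha i k + q%:Z * alpha j k].

(* m^a_{ij} is finite and equal to m *)
Definition m_is R (a : A) (i j : I) (m : nat) : Prop :=
  exists s : seq {ffun I -> int},
    uniq s /\ size s = m /\ (forall v, v \in s <-> (R a v /\ in_cone i j v)).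

Definition R1 R : Prop :=
  forall a v, R a v <-> (Rplus R a v \/ Rplus R a (- v)).
Definition R2 R : Prop :=
  forall a i v, (R a v /\ exists k : int, v = [ffun l => k * alpha i l]) <->
                (v = alpha i \/ v = - alpha i).
Definition R3 rho C R : Prop :=
  forall a i v, R (rho i a) v <-> exists w, R a w /\ sigma C a i w = v.
Definition R4 rho R : Prop :=
  forall a i j m, i != j -> m_is R a i j m ->
    iter m (fun b => rho i (rho j b)) a = a.

Definition root_system rho C R : Prop :=
  cartan_scheme rho C /\ R1 R /\ R2 R /\ R3 rho C R /\ R4 rho R.

End CartanDefs.

(** By (R2) every [alpha_j]
    is a root and by (R3) the reflections [sigma_i] map roots to roots; by (R1)
    no root has two coordinates of opposite sign.  Applying this sign rule to
    the roots [sigma_i^a (alpha_j) = alpha_j - c^a_ij alpha_i],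
    [sigma_i^a sigma_i^(rho_i a) (alpha_j) = alpha_j + (c^(rho_i a)_ij - c^a_ij) alpha_i]
    and, when [c^a_ij = 0], [sigma_i^a sigma_j^(rho_j a) (alpha_i) = - alpha_i - c^a_ji alpha_j]
    yields [c^a_ij <= 0], axiom (C2), and [c^a_ji = 0] respectively. *)
From mathcomp Require Import all_boot all_order all_algebra.
From mathcomp Require Import ring zify.
Import Order.TTheory GRing.Theory Num.Theory.
Local Open Scope ring_scope.
Set Implicit Arguments. Unset Strict Implicit.

Section TwoRootCombinations.
Variable I : finType.
Implicit Types (i j l : I) (p q : int).

Definition comb2 i j p q : {ffun I -> int} := [ffun l => p * alpha i l + q * alpha j l].

Lemma comb2_l i j p q : i != j -> comb2 i j p q i = p.
Proof. by move=> ij; rewrite !ffunE eqxx (negbTE ij) mulr1 mulr0 addr0. Qed.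

Lemma comb2_r i j p q : i != j -> comb2 i j p q j = q.
Proof. by move=> ij; rewrite !ffunE eqxx eq_sym (negbTE ij) mulr1 mulr0 add0r. Qed.

Lemma comb2C i j p q : comb2 i j p q = comb2 j i q p.
Proof. by apply/ffunP => l; rewrite !ffunE addrC. Qed.

Lemma sum_mul_alpha (f : I -> int) i : \sum_l f l * alpha i l = f i.
Proof.
rewrite (bigD1 i) //= big1 ?addr0; first by rewrite ffunE eqxx mulr1.
by move=> l /negbTE il; rewrite ffunE il mulr0.
Qed.

Variables (A : Type) (C : A -> I -> I -> int).

Lemma sigma_comb2 a i j p q : C a i i = 2 ->
  sigma C a i (comb2 i j p q) = comb2 i j (- p - q * C a i j) q.
Proof.
move=> Cii; have pairing : \sum_l C a i l * comb2 i j p q l = p * C a i i + q * C a i j.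
  under eq_bigr => l _ do rewrite ffunE mulrDr mulrCA [C a i l * _]mulrCA.
  by rewrite big_split /= -!mulr_sumr !sum_mul_alpha.
by apply/ffunP => l; rewrite !ffunE pairing Cii; ring.
Qed.

Lemma sigma_alpha a i j : sigma C a i (alpha j) = comb2 i j (- C a i j) 1.
Proof.
by apply/ffunP => l; rewrite !ffunE sum_mul_alpha; ring.
Qed.

End TwoRootCombinations.

Lemma root_coord_mul_ge0 (I : finType) (A : Type) (R : A -> {ffun I -> int} -> Prop)
    a v k l :
  R1 R -> R a v -> 0 <= v k * v l.
Proof.
move=> HR1 /HR1 [[_ /forallP v_ge0] | [_ /forallP v_le0]]; first exact: mulr_ge0.
by move: (v_le0 k) (v_le0 l); rewrite !ffunE !oppr_ge0; apply: mulr_le0.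
Qed.

Section CartanFromRoots.
Variables (I : finType) (A : Type) (rho : I -> A -> A) (C : A -> I -> I -> int)
  (R : A -> {ffun I -> int} -> Prop).
Hypotheses (rhoK : forall i a, rho i (rho i a) = a) (Cii : forall a i, C a i i = 2).
Hypotheses (HR1 : R1 R) (HR2 : R2 R) (HR3 : R3 rho C R).

Lemma root_alpha a i : R a (alpha i).
Proof. by have [_ /(_ (or_introl erefl)) []] := HR2 a i (alpha i). Qed.

Lemma root_sigma a i w : R a w -> R (rho i a) (sigma C a i w).
Proof. by move=> Rw; apply/HR3; exists w. Qed.

Lemma root_comb2_mul_ge0 a i j p q : i != j -> R a (comb2 i j p q) -> 0 <= p * q.
Proof.
by move=> ij /(root_coord_mul_ge0 i j HR1); rewrite comb2_l // comb2_r.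
Qed.

Lemma cartan_offdiag_le0 a i j : i != j -> C a i j <= 0.
Proof.
move=> ij; have := root_sigma i (root_alpha a j).
by rewrite sigma_alpha => /(root_comb2_mul_ge0 ij); lia.
Qed.

Lemma cartan_le_rho a i j : C a i j <= C (rho i a) i j.
Proof.
have [<-|ij] := eqVneq i j; first by rewrite !Cii.
have := root_sigma i (root_sigma i (root_alpha (rho i a) j)).
by rewrite !rhoK sigma_alpha sigma_comb2 // => /(root_comb2_mul_ge0 ij); lia.
Qed.

Lemma cartan_rho a i j : C a i j = C (rho i a) i j.
Proof.
by apply/le_anti; rewrite cartan_le_rho /=; have := cartan_le_rho (rho i a) i j; rewrite rhoK.
Qed.

Lemma cartan_zero_sym a i j : C a i j = 0 -> C a j i = 0.
Proof.
have [<-|ij Cij0] := eqVneq i j; first by rewrite Cii.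
have := root_sigma i (root_sigma j (root_alpha (rho j a) i)).
rewrite rhoK sigma_alpha -cartan_rho comb2C sigma_comb2 // Cij0.
have Cji_le0 : C a j i <= 0 by apply: cartan_offdiag_le0; rewrite eq_sym.
by move=> /(root_comb2_mul_ge0 ij); lia.
Qed.

Lemma cartan_scheme_of_roots : (exists a : A, True) -> cartan_scheme rho C.
Proof.
move=> A_nonempty; split=> //; split; last by split=> //; exact: cartan_rho.
by move=> a; split=> //; split; [exact: cartan_offdiag_le0 | exact: cartan_zero_sym].
Qed.

End CartanFromRoots.

Theorem lemma2p5 (I : finType) (A : Type)
  (rho : I -> A -> A) (C : A -> I -> I -> int)
  (R : A -> {ffun I -> int} -> Prop) :
  (0 < #|I|)%N ->
  (exists a : A, True) ->
  (forall i a, rho i (rho i a) = a) ->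
  (forall a i, C a i i = 2) ->
  R1 R -> R2 R -> R3 rho C R -> R4 rho R ->
  cartan_scheme rho C /\ root_system rho C R.
Proof.
move=> _ A_nonempty rhoK Cii HR1 HR2 HR3 HR4.
have scheme := cartan_scheme_of_roots rhoK Cii HR1 HR2 HR3 A_nonempty.
by split; last by split; last by split.
Qed.
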